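(* Let $n\ge2$, let $f$ be a $\gamma_{tr2}(P_2\square P_n)$-function such that the number of vertices $v$ with $f(v)=\emptyset$ is minimum among all $\gamma_{tr2}(P_2\square P_n)$-functions, and let $a_j=|f((0,j))|+|f((1,j))|$ for $j\in\{0,\dots,n-1\}$. Then $a_j+a_{j+1}\ge3$ for every $j\in\{0,1,\dots,n-2\}$.
   Context: $P_m$ denotes the directed path with vertex set $\{0,1,\dots,m-1\}$ and arcs $(i,i+1)$ for $0\le i\le m-2$. The Cartesian product $D_1\square D_2$ has vertex set $V(D_1)\times V(D_2)$, with an arc from $(x_1,y_1)$ to $(x_2,y_2)$ iff either $(x_1,x_2)$ is an arc of $D_1$ and $y_1=y_2$, or $x_1=x_2$ and $(y_1,y_2)$ is an arc of $D_2$. For a digraph $D$ and positive integer $k$, a $k$-rainbow dominating function on $D$ is $f:V(D)\to\mathcal P(\{1,\dots,k\})$ such that every $v$ with $f(v)=\emptyset$ satisfies $\bigcup_{u\in N^-(v)}f(u)=\{1,\dots,k\}$, where $N^-(v)$ is the set of in-neighbors of $v$; its weight is $\sum_v|f(v)|$. It is total if additionally the subdigraph induced by $\{v:f(v)\ne\emptyset\}$ has no isolated vertex (a vertex with neither in- nor out-neighbors in it). $\gamma_{trk}(D)$ is the minimum weight of a total $k$-rainbow dominating function, and a $\gamma_{trk}(D)$-function is one attaining it. *)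

From mathcomp Require Import all_boot.
Set Implicit Arguments. Unset Strict Implicit. Unset Printing Implicit Defensive.

Definition path_arc (m : nat) : rel (ordinal m) := fun (i j : ordinal m) => val j == (val i).+1.

Definition cart_arc (T1 T2 : finType) (a1 : rel T1) (a2 : rel T2) : rel (T1 * T2) :=
  fun x y => (a1 x.1 y.1 && (x.2 == y.2)) || ((x.1 == y.1) && a2 x.2 y.2).

(* Colours {1,..,k} are represented by 'I_k. *)
Section Rainbow.
Variables (T : finType) (arc : rel T) (k : nat).

Definition rainbow_dom (f : T -> {set 'I_k}) : Prop :=
  forall v, f v = set0 -> \bigcup_(u | arc u v) f u = [set: 'I_k].

(* total: no vertex with nonempty label is isolated in the induced subdigraph *)
Definition total_rainbow_dom (f : T -> {set 'I_k}) : Prop :=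
  rainbow_dom f /\
  forall v, f v != set0 ->
    exists u, [&& u != v, f u != set0 & arc u v || arc v u].

Definition rd_weight (f : T -> {set 'I_k}) : nat := \sum_(v : T) #|f v|.

Definition gamma_trk_function (f : T -> {set 'I_k}) : Prop :=
  total_rainbow_dom f /\
  forall g : T -> {set 'I_k}, total_rainbow_dom g -> rd_weight f <= rd_weight g.

Definition num_empty (f : T -> {set 'I_k}) : nat := #|[set v | f v == set0]|.
End Rainbow.

Definition P2Pn_arc (n : nat) : rel ('I_2 * 'I_n) := @cart_arc _ _ (@path_arc 2) (@path_arc n).

From mathcomp Require Import all_boot.
From mathcomp Require Import zify.
Set Implicit Arguments. Unset Strict Implicit. Unset Printing Implicit Defensive.

(* Suppose a_j + a_(j+1) <= 2.  An empty vertex needs both colours among its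
   in-neighbours: an empty (1,j+1) forces |f(0,j+1)| + |f(1,j)| >= 2 and an empty
   (0,j+1) forces f(0,j) = {1,2}; this leaves only the case where f(0,j) is empty and
   f(0,j-1) = {1,2}.  If (1,j-1) were labelled, relabelling (0,j-1) and (0,j) by {1}
   and {2} would give a gamma_tr2-function with fewer empty vertices.  So (1,j-1) is
   empty, hence (1,j) is labelled and, by totality, so is (1,j+1): a contradiction. *)

Lemma card_bigcup_seq_le (I : eqType) (T : finType) (s : seq I) (F : I -> {set T}) :
  #|\bigcup_(i <- s) F i| <= \sum_(i <- s) #|F i|.
Proof.
elim: s => [|i s IHs]; first by rewrite !big_nil cards0.
by rewrite !big_cons (leq_trans (leq_card_setU _ _)) ?leq_add2l.
Qed.

Section RainbowNeighbourhoods.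
Variables (T : finType) (arc : rel T) (k : nat) (f : T -> {set 'I_k}).

Lemma rainbow_dom_in_cover (v : T) (s : seq T) :
  rainbow_dom arc f -> f v = set0 -> (forall u, arc u v -> u \in s) ->
  k <= \sum_(u <- s) #|f u|.
Proof.
move=> dom fv0 in_s; apply: leq_trans (card_bigcup_seq_le s f).
have cover : [set: 'I_k] \subset \bigcup_(u <- s) f u.
  rewrite -(dom v fv0); apply/subsetP => y /bigcupP[u uv yu].
  by rewrite bigcup_seq; apply/bigcupP; exists u; rewrite ?in_s.
by have := subset_leq_card cover; rewrite cardsT card_ord.
Qed.

Lemma total_rainbow_dom_nbr (v : T) (s : seq T) :
  total_rainbow_dom arc f -> f v != set0 ->
  (forall u, u != v -> arc u v || arc v u -> u \in s) ->
  has (fun u => f u != set0) s.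
Proof.
move=> [_ tot] fv nbr_s; have [u /and3P[uv fu uv_arc]] := tot v fv.
by apply/hasP; exists u; rewrite ?nbr_s.
Qed.

End RainbowNeighbourhoods.

Section SplitLabel.
Variables (T : finType) (arc : rel T) (k : nat) (f : T -> {set 'I_k}).
Variables (p q : T) (x : 'I_k).
Hypotheses (fq0 : f q = set0) (xp : x \in f p) (fp_gt1 : 1 < #|f p|).

Definition split_label (v : T) : {set 'I_k} :=
  if v == p then [set x] else if v == q then f p :\ x else f v.

Let pq : p != q.
Proof. by apply: contraTneq xp => ->; rewrite fq0 inE. Qed.

Lemma split_label_eq0 v : (split_label v == set0) = (v != q) && (f v == set0).
Proof.
rewrite /split_label; case: (eqVneq v p) => [->|_].
  by rewrite pq -!cards_eq0 cards1; have := fp_gt1; case: #|f p|.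
case: (eqVneq v q) => [->|_] //=.
by have := fp_gt1; rewrite -cards_eq0 (cardsD1 x (f p)) xp; case: #|_|.
Qed.

Lemma split_label_weight : rd_weight split_label = rd_weight f.
Proof.
rewrite /rd_weight (bigD1 p) // [RHS](bigD1 p) // (bigD1 q) 1?eq_sym //.
rewrite [in RHS](bigD1 q) 1?eq_sym //= addnA [in RHS]addnA.
congr (_ + _); last first.
  by apply: eq_bigr => v /andP[vp vq]; rewrite /split_label (negbTE vp) (negbTE vq).
rewrite /split_label eqxx eq_sym (negbTE pq) eqxx fq0 cards0 cards1 addn0.
by rewrite [in RHS](cardsD1 x) xp.
Qed.

Lemma split_label_num_empty : num_empty split_label < num_empty f.
Proof.
rewrite /num_empty; apply: proper_card; apply/properP; split.
  by apply/subsetP => v; rewrite !inE split_label_eq0 => /andP[].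
by exists q; rewrite !inE ?split_label_eq0 ?eqxx ?fq0.
Qed.

Lemma split_label_total :
  arc p q -> (forall w, arc p w -> w != q -> f w != set0) ->
  total_rainbow_dom arc f -> total_rainbow_dom arc split_label.
Proof.
move=> arc_pq out_p [dom tot]; split.
  move=> v /eqP; rewrite split_label_eq0 => /andP[vq /eqP fv0].
  apply/eqP; rewrite eqEsubset subsetT -(dom v fv0) /=.
  apply/subsetP => y /bigcupP[u uv yu]; apply/bigcupP; exists u => //.
  have uq : u != q by apply: contraTneq yu => ->; rewrite fq0 inE.
  have up : u != p.
    by apply: contraTneq uv => ->; apply/negP => /out_p /(_ vq); rewrite fv0 eqxx.
  by rewrite /split_label (negbTE up) (negbTE uq).
move=> v; rewrite split_label_eq0 negb_and negbK.
have nonempty u : f u != set0 -> split_label u != set0.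
  by rewrite split_label_eq0 negb_and => ->; rewrite orbT.
case/orP => [/eqP ->|fv].
  by exists p; rewrite pq arc_pq nonempty // -card_gt0 ltnW.
case: (eqVneq v p) => [->|vp].
  by exists q; rewrite eq_sym pq arc_pq orbT split_label_eq0 eqxx.
have [u /and3P[uv fu uv_arc]] := tot v fv.
by exists u; rewrite uv nonempty.
Qed.

End SplitLabel.

Lemma min_empty_gamma_split (T : finType) (arc : rel T) (k : nat) (f : T -> {set 'I_k})
    (p q : T) :
  gamma_trk_function arc f ->
  (forall g : T -> {set 'I_k}, gamma_trk_function arc g -> num_empty f <= num_empty g) ->
  arc p q -> f q = set0 -> 1 < #|f p| ->
  exists2 w, arc p w & w != q /\ f w = set0.
Proof.
move=> [total_f min_weight] min_empty arc_pq fq0 fp_gt1.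
have [x xp] : exists x, x \in f p by apply/card_gt0P; apply: ltnW.
case: (boolP [exists w, [&& arc p w, w != q & f w == set0]]) => [|no_w].
  by case/existsP => w /and3P[pw wq /eqP fw0]; exists w.
have out_p w : arc p w -> w != q -> f w != set0.
  by move=> pw wq; apply: contra no_w => fw0; apply/existsP; exists w; rewrite pw wq.
have gamma_g : gamma_trk_function arc (split_label f p q x).
  split; first exact: split_label_total.
  by move=> g total_g; rewrite split_label_weight //; apply: min_weight.
by have := min_empty _ gamma_g; rewrite leqNgt split_label_num_empty.
Qed.

Lemma ord2_cases (r : 'I_2) : r = ord0 \/ r = ord_max.
Proof. by case: r => [[|[|m]] lt_r]; [left; apply: val_inj|right; apply: val_inj|]. Qed.

Section LadderDigraph.
Variable n : nat.
Local Notation arc := (@P2Pn_arc n).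

Lemma P2Pn_arcE (r s : 'I_2) (i j : 'I_n) :
  arc (r, i) (s, j) =
  [&& r == ord0, s == ord_max & i == j] || (r == s) && (val j == (val i).+1).
Proof.
rewrite /P2Pn_arc /cart_arc /path_arc /=.
by case: (ord2_cases r) => ->; case: (ord2_cases s) => ->.
Qed.

Lemma ord_pred_uniq (i i' j : 'I_n) : val j = (val i).+1 -> val j = (val i').+1 -> i = i'.
Proof. by move=> -> [/val_inj]. Qed.

Lemma top_in_nbr u (i j : 'I_n) : val j = (val i).+1 -> arc u (ord0, j) -> u = (ord0, i).
Proof.
case: u => r l ji; rewrite P2Pn_arcE; case: (ord2_cases r) => -> //= /eqP lj.
by rewrite (ord_pred_uniq lj ji).
Qed.

Lemma top0_no_in_nbr u (j : 'I_n) : val j = 0 -> ~~ arc u (ord0, j).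
Proof. by case: u => r l j0; rewrite P2Pn_arcE j0; case: (ord2_cases r) => ->. Qed.

Lemma bottom_in_nbr u (i j : 'I_n) :
  val j = (val i).+1 -> arc u (ord_max, j) -> u \in [:: (ord0, j); (ord_max, i)].
Proof.
case: u => r l ji; rewrite P2Pn_arcE !inE; case: (ord2_cases r) => -> /=.
  by rewrite orbF => /eqP ->; rewrite eqxx.
by move=> /eqP lj; rewrite (ord_pred_uniq lj ji) !eqxx ?orbT.
Qed.

Lemma bottom_nbr u (i j j' : 'I_n) :
  val j = (val i).+1 -> val j' = (val j).+1 ->
  arc u (ord_max, j) || arc (ord_max, j) u ->
  u \in [:: (ord0, j); (ord_max, i); (ord_max, j')].
Proof.
case: u => r l ji j'j; rewrite !P2Pn_arcE !inE; case: (ord2_cases r) => -> /=.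
  by rewrite !orbF => /eqP ->; rewrite eqxx.
case/orP=> /eqP lj; first by rewrite (ord_pred_uniq lj ji) eqxx.
by rewrite (_ : l = j') ?eqxx ?orbT //; apply/val_inj; rewrite /= lj j'j.
Qed.

Lemma top_out_nbr w (i j : 'I_n) :
  val j = (val i).+1 -> arc (ord0, i) w -> w != (ord0, j) -> w = (ord_max, i).
Proof.
case: w => r l ji; rewrite P2Pn_arcE; case: (ord2_cases r) => -> /=.
  by move=> /eqP lj; case/negP; rewrite (_ : l = j) //; apply/val_inj; rewrite /= lj ji.
by rewrite orbF => /eqP ->.
Qed.

Variable f : 'I_2 * 'I_n -> {set 'I_2}.
Hypothesis dom : rainbow_dom arc f.

Lemma top_empty_cover (i j : 'I_n) :
  val j = (val i).+1 -> f (ord0, j) = set0 -> 2 <= #|f (ord0, i)|.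
Proof.
move=> ji tj0; have := rainbow_dom_in_cover (s := [:: (ord0, i)]) dom tj0.
by rewrite big_seq1; apply=> u /(top_in_nbr ji) ->; rewrite inE.
Qed.

Lemma top_empty_pred (j : 'I_n) :
  f (ord0, j) = set0 -> exists2 i : 'I_n, val j = (val i).+1 & 2 <= #|f (ord0, i)|.
Proof.
move=> tj0; case: j tj0 => [[|m] lt_j] tj0.
  have no_in_nbr u : arc u (ord0, Ordinal lt_j) -> u \in [::].
    by rewrite (negbTE (top0_no_in_nbr _ _)).
  by have := rainbow_dom_in_cover dom tj0 no_in_nbr; rewrite big_nil.
have lt_m : m < n by apply: ltnW.
by exists (Ordinal lt_m) => //; apply: top_empty_cover tj0.
Qed.

Lemma bottom_empty_cover (i j : 'I_n) :
  val j = (val i).+1 -> f (ord_max, j) = set0 -> 2 <= #|f (ord0, j)| + #|f (ord_max, i)|.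
Proof.
move=> ji bj0.
have := rainbow_dom_in_cover (s := [:: (ord0, j); (ord_max, i)]) dom bj0.
by rewrite big_cons big_seq1; apply=> u; apply: bottom_in_nbr.
Qed.

End LadderDigraph.

Theorem lemma4p2 (n : nat) (hn : 2 <= n) (f : 'I_2 * 'I_n -> {set 'I_2})
  (hf : gamma_trk_function (@P2Pn_arc n) f)
  (hmin : forall g : 'I_2 * 'I_n -> {set 'I_2},
      gamma_trk_function (@P2Pn_arc n) g -> num_empty f <= num_empty g) :
  let a := fun j : 'I_n => #|f (ord0, j)| + #|f (ord_max, j)| in
  forall j j' : 'I_n, val j' = (val j).+1 -> 3 <= a j + a j'.
Proof.
move=> a j j' j'j; rewrite /a leqNgt; apply/negP => small.
have [total _] := hf; have [dom _] := total.
have bj'_cover : 0 < #|f (ord_max, j')| \/ 2 <= #|f (ord0, j')| + #|f (ord_max, j)|.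
  case: (posnP #|f (ord_max, j')|) => [/eqP|]; last by left.
  by rewrite cards_eq0 => /eqP /(bottom_empty_cover dom j'j); right.
have tj'_ne0 : 0 < #|f (ord0, j')|.
  rewrite card_gt0; apply/eqP => tj'0.
  have := top_empty_cover dom j'j tj'0; rewrite tj'0 cards0 in bj'_cover small; lia.
have tj0 : f (ord0, j) = set0.
  by apply/eqP; rewrite -cards_eq0; lia.
have [i ji ti_full] := top_empty_pred dom tj0.
have arc_ij : P2Pn_arc (ord0, i) (ord0, j) by rewrite P2Pn_arcE ji !eqxx orbT.
have [w iw [wj w0]] := min_empty_gamma_split hf hmin arc_ij tj0 ti_full.
have bi0 : f (ord_max, i) = set0 by rewrite -(top_out_nbr ji iw wj).
have bj_ne0 : f (ord_max, j) != set0.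
  by apply/eqP => bj0; have := bottom_empty_cover dom ji bj0; rewrite tj0 bi0 cards0.
have := total_rainbow_dom_nbr total bj_ne0 (fun u _ => bottom_nbr ji j'j).
rewrite /= tj0 bi0 eqxx /= orbF -card_gt0 => bj'_ne0.
by move: small; rewrite -card_gt0 in bj_ne0; lia.
Qed.
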